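(* Let $(S,M,T)$ be a triangulated bordered unpunctured surface of genus $0$ and let $\Lambda_1,\Lambda_2$ be surface algebras of type $(S,M,T)$ given by admissible cuts $\chi_1,\chi_2$. Then $\tilde\Lambda_1$ and $\tilde\Lambda_2$ are graded equivalent via the identity if and only if $(\chi_1,\chi_2)$ is equi-distributed.
   Context: $S$ is a connected oriented Riemann surface with boundary and no punctures, $M\subset\partial S$ a finite set of marked points with at least one on each boundary component (if $S$ is a disc, $|M|\ge5$). A triangulation $T$ is a maximal set of pairwise non-crossing arcs (isotopy classes of simple curves between marked points, interior avoiding $M$ and $\partial S$, not cutting out a monogon or digon); it cuts $S$ into triangles; a triangle is internal if none of its sides is a boundary segment. The quiver $Q_T$ has a vertex $i$ per arc $\tau_i$ and an arrow $i\to j$ for each triangle in which $\tau_i,\tau_j$ are sides with $\tau_j$ following $\tau_i$ counterclockwise. $\Lambda_T=kQ_T/I_T$ with $I_T$ generated by the length-two subpaths of the oriented 3-cycles coming from internal triangles. An admissible cut $\chi$ selects one vertex (marked point) $v$ in each internal triangle; the two sides at $v$ determine an arrow of that 3-cycle (the local cut); $\chi$ is identified with this set of arrows, and the surface algebra is $\Lambda=kQ_T/\langle I_T\cup\chi\rangle$. $\tilde\Lambda_i$ denotes $\Lambda_T$ graded by the weight $w_i(\alpha)=1$ if $\alpha\in\chi_i$, $w_i(\alpha)=0$ otherwise. $\tilde\Lambda_1,\tilde\Lambda_2$ are graded equivalent via the identity if there is a function $r\colon (Q_T)_0\to\mathbb{Z}$ with $w_2(\alpha)=w_1(\alpha)+r(s(\alpha))-r(t(\alpha))$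 for every arrow $\alpha$ of $Q_T$ (i.e. a graded equivalence induced by the identity on $Q_T$). $(\chi_1,\chi_2)$ is equi-distributed if for every boundary component $B$ of $S$ the number of local cuts of $\chi_1$ whose selected marked point lies on $B$ equals the corresponding number for $\chi_2$. *)

(* Combinatorial model of a triangulated bordered
   unpunctured oriented surface (S,M,T): a collection of triangles whose
   sides (listed counterclockwise) are either arcs of T (each glued to
   exactly one other triangle side, orientably) or boundary segments. *)
From HB Require Import structures.
From mathcomp Require Import all_boot all_order all_algebra.
Set Implicit Arguments.
Unset Strict Implicit.
Unset Printing Implicit Defensive.

(* For a triangle t, its corners 0,1,2 and sides 0,1,2 are
   listed counterclockwise: side i goes from corner i to corner i+1
   (mod 3); so corner k is where side k-1 ends and side k starts.
   vtx t k is the marked point at corner k. *)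
Record tsurf := TSurf {
  Pt  : finType;
  Arc : finType;
  Seg : finType;
  Tri : finType;
  side : Tri -> 'I_3 -> (Arc + Seg)%type;
  vtx  : Tri -> 'I_3 -> Pt
}.

Section Surf.
Variable S : tsurf.

Definition is_arc (e : (Arc S + Seg S)%type) : bool :=
  if e is inl _ then true else false.
Definition is_seg (e : (Arc S + Seg S)%type) : bool := ~~ is_arc e.

Definition dside (d : Tri S * 'I_3) := side d.1 d.2.
Definition dvtx (d : Tri S * 'I_3) := vtx d.1 d.2.

Definition glued (d d' : Tri S * 'I_3) : bool :=
  [&& d != d', dside d == dside d' & is_arc (dside d)].

(* corner adjacency around a marked point: the side starting at corner c
   is glued (orientably) to the side ending at corner c' *)
Definition cadj (c c' : Tri S * 'I_3) : bool :=
  glued c (c'.1, ord_pred c'.2).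
Definition crel : rel (Tri S * 'I_3) := [rel c c' | cadj c c' || cadj c' c].

Definition trel : rel (Tri S) :=
  [rel t t' | [exists i : 'I_3, exists j : 'I_3, glued (t, i) (t', j)]].

Definition brel : rel (Pt S) :=
  [rel p q | [exists d : Tri S * 'I_3,
     [&& is_seg (dside d), dvtx d == p & vtx d.1 (ordS d.2) == q]]].
Definition bsym : rel (Pt S) := [rel p q | brel p q || brel q p].

Definition same_bdry (p q : Pt S) : bool := connect bsym p q.

Definition nbdry : nat := n_comp bsym (@predT (Pt S)).

Definition internal (t : Tri S) : bool := [forall i : 'I_3, is_arc (side t i)].

(* Well-formedness: the gluing describes a connected, oriented, unpunctured
   bordered surface of genus 0, with its triangulation; disc => |M| >= 5. *)
Definition genus0_triangulated : Prop :=
     (forall a : Arc S, #|[set d : Tri S * 'I_3 | dside d == inl a]| = 2) /\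
      (forall s : Seg S, #|[set d : Tri S * 'I_3 | dside d == inr s]| = 1) /\
      (* marked points = classes of corners glued around a vertex *)
      (forall c c', (dvtx c == dvtx c') = connect crel c c') /\
      (forall p : Pt S, exists c, dvtx c = p) /\
      (* no punctures: every marked point has a corner on the boundary *)
      (forall p : Pt S, exists c, dvtx c = p /\
          (is_seg (dside c) \/ is_seg (side c.1 (ord_pred c.2)))) /\
      0 < #|Tri S| /\ (forall t t' : Tri S, connect trel t t') /\
      (* genus 0: V - E + F = 2 - 2g - b with g = 0 *)
      #|Pt S| + #|Tri S| + nbdry = 2 + #|Arc S| + #|Seg S| /\
      (nbdry = 1 -> 5 <= #|Pt S|).

(* An admissible cut: for each internal triangle t, the chosen corner chi t
   (values on non-internal triangles are irrelevant).  The arrows of Q_T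
   are the pairs (t,k) whose two sides at corner k are arcs; the arrow goes
   from the arc of side k-1 to the arc of side k. *)
Definition cut := Tri S -> 'I_3.

Definition weight (chi : cut) (t : Tri S) (k : 'I_3) : int :=
  (internal t && (k == chi t))%:Z.

Definition graded_equiv_id (chi1 chi2 : cut) : Prop :=
  exists r : Arc S -> int, forall (t : Tri S) (k : 'I_3) (a b : Arc S),
    side t (ord_pred k) = inl a -> side t k = inl b ->
    weight chi2 t k = (weight chi1 t k + r a - r b)%R.

Definition ncuts_on (chi : cut) (p : Pt S) : nat :=
  #|[set t : Tri S | internal t && same_bdry (vtx t (chi t)) p]|.

Definition equidistributed (chi1 chi2 : cut) : Prop :=
  forall p : Pt S, ncuts_on chi1 p = ncuts_on chi2 p.

End Surf.

(* Write w c for the difference of the two weights at a corner c of a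
   triangle.  The gradings are equivalent via the identity exactly when w is
   the coboundary c |-> r(side ending at c) - r(side starting at c) of an
   integer function r on arcs and boundary segments: on a non-internal
   triangle both weights vanish, so r extends to its segments by a constant.
   A coboundary sums to zero over the three corners of each triangle and over
   the corners at the marked points of each boundary component; for w the
   first sums vanish anyway and the second ones are the differences of the
   local cut counts.  Conversely, over the rationals the complex
   edges -> corners -> triangles + boundary components is exact in the middle:
   by connectedness the left kernels of both maps are at most one-dimensional,
   and the Euler relation of genus 0 together with |M| <= #segments leaves no
   room for homology.  A rational r with integral
   coboundary is integral up to a constant. *)
From mathcomp Require Import all_boot all_order all_algebra.
From mathcomp Require Import zify.
Set Implicit Arguments.
Unset Strict Implicit.
Unset Printing Implicit Defensive.
Import GRing.Theory Num.Theory.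

Local Open Scope ring_scope.

Lemma sum_mul_natb (R : pzSemiRingType) (I : finType) (F : I -> R) (P : pred I) :
  \sum_(i : I) F i * (P i)%:R = \sum_(i | P i) F i.
Proof. by rewrite [RHS]big_mkcond; apply: eq_bigr => i _; case: (P i); rewrite ?mulr1 ?mulr0. Qed.

Lemma sum_mul_eqb (R : pzSemiRingType) (I : finType) (F : I -> R) (a : I) :
  \sum_(i : I) F i * (i == a)%:R = F a.
Proof. by rewrite sum_mul_natb big_pred1_eq. Qed.

Section FunMatrix.
Variable F : fieldType.

Definition vecf (I : finType) (v : I -> F) : 'rV[F]_#|I| := \row_i v (enum_val i).
Definition mxf (I J : finType) (f : I -> J -> F) : 'M[F]_(#|I|, #|J|) :=
  \matrix_(i, j) f (enum_val i) (enum_val j).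

Lemma vecfE (I : finType) (v : I -> F) (x : I) : vecf v 0 (enum_rank x) = v x.
Proof. by rewrite mxE enum_rankK. Qed.

Lemma vecf_eta (I : finType) (u : 'rV[F]_#|I|) : u = vecf (fun x => u 0 (enum_rank x)).
Proof. by apply/rowP => i; rewrite mxE enum_valK. Qed.

Lemma eq_vecf (I : finType) (v w : I -> F) : v =1 w -> vecf v = vecf w.
Proof. by move=> vw; apply/rowP => i; rewrite !mxE vw. Qed.

Lemma vecf_inj (I : finType) (v w : I -> F) : vecf v = vecf w -> v =1 w.
Proof. by move=> vw x; rewrite -!(vecfE _ x) vw. Qed.

Lemma vecf0 (I : finType) : vecf (fun _ : I => 0) = 0.
Proof. by apply/rowP => i; rewrite !mxE. Qed.

Lemma mul_vecf_mxf (I J : finType) (v : I -> F) (f : I -> J -> F) :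
  vecf v *m mxf f = vecf (fun j => \sum_(i : I) v i * f i j).
Proof.
apply/rowP => j; rewrite !mxE (reindex (@enum_rank I)) /=.
  by apply: eq_bigr => i _; rewrite !mxE enum_rankK.
exact: onW_bij (@enum_rank_bij I).
Qed.

Lemma trmx_mxf (I J : finType) (f : I -> J -> F) : (mxf f)^T = mxf (fun j i => f i j).
Proof. by apply/matrixP => i j; rewrite !mxE. Qed.

Lemma rank_kermx_le1 m n (M : 'M[F]_(m, n)) (v : 'rV[F]_m) :
  (forall u : 'rV_m, u *m M = 0 -> (u <= v)%MS) -> (\rank (kermx M) <= 1)%N.
Proof.
move=> kerMv; apply: leq_trans (rank_leq_row v); apply: mxrankS.
by apply/row_subP => i; apply: kerMv; rewrite -row_mul mulmx_ker row0.
Qed.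

Lemma kermx_sub_of_rank m n p (D : 'M[F]_(m, n)) (P : 'M[F]_(n, p)) :
  D *m P = 0 -> (n + \rank (kermx D) + \rank (kermx P^T) <= m + p)%N ->
  (kermx P <= D)%MS.
Proof.
move=> DP0 dim_le.
have sDkerP : (D <= kermx P)%MS by rewrite sub_kermx DP0.
have [_ <-] := mxrank_leqif_sup sDkerP.
have := mxrank_ker D; have := mxrank_ker P^T; have := mxrank_ker P.
have := rank_leq_row D; have := rank_leq_col P.
rewrite mxrank_tr eqn_leq mxrankS ?andbT; lia.
Qed.

End FunMatrix.

Arguments vecf0 {F} I.

Section TriangulatedSurface.
Variable S : tsurf.
Hypothesis HS : genus0_triangulated S.

Local Notation corner := (Tri S * 'I_3)%type.
Local Notation edge := (Arc S + Seg S)%type.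

(* At corner [c] the side [dside c] starts and the side [dside_in c] ends. *)
Definition dside_in (c : corner) : edge := side c.1 (ord_pred c.2).
Definition dend (c : corner) : Pt S := vtx c.1 (ordS c.2).

Lemma card_arc_sides (a : Arc S) : #|[set c : corner | dside c == inl a]| = 2.
Proof. by case: HS. Qed.

Lemma card_seg_sides (s : Seg S) : #|[set c : corner | dside c == inr s]| = 1.
Proof. by case: HS => _ []. Qed.

Lemma eq_dvtx_connect (c c' : corner) : (dvtx c == dvtx c') = connect (@crel S) c c'.
Proof. by case: HS => _ [] _ []. Qed.

Lemma dvtx_surj (p : Pt S) : exists c : corner, dvtx c = p.
Proof. by case: HS => _ [] _ [] _ []. Qed.

Lemma boundary_corner (p : Pt S) :
  exists c : corner, dvtx c = p /\ (is_seg (dside c) \/ is_seg (dside_in c)).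
Proof. by case: HS => _ [] _ [] _ [] _ []. Qed.

Lemma card_Tri_gt0 : (0 < #|Tri S|)%N.
Proof. by case: HS => _ [] _ [] _ [] _ [] _ []. Qed.

Lemma trel_connected (t t' : Tri S) : connect (@trel S) t t'.
Proof. by case: HS => _ [] _ [] _ [] _ [] _ [] _ []. Qed.

Lemma euler_genus0 : #|Pt S| + #|Tri S| + nbdry S = 2 + #|Arc S| + #|Seg S|.
Proof. by case: HS => _ [] _ [] _ [] _ [] _ [] _ [] _ []. Qed.

Lemma glued_sym (c c' : corner) : glued c c' = glued c' c.
Proof.
by apply/idP/idP => /and3P [n /eqP e a]; apply/and3P; split;
  rewrite 1?eq_sym ?e // -e.
Qed.

Lemma glued_side (c c' : corner) : glued c c' -> dside c = dside c'.
Proof. by case/and3P=> _ /eqP. Qed.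

Lemma glued_arc (c c' : corner) : glued c c' -> is_arc (dside c).
Proof. by case/and3P. Qed.

Lemma glued_dvtx (c c' : corner) : glued c c' -> dvtx c = dend c'.
Proof.
move=> g; apply/eqP; rewrite -[dend c']/(dvtx (c'.1, ordS c'.2)) eq_dvtx_connect.
by apply: connect1; rewrite /crel /= /cadj /= ordSK -surjective_pairing g.
Qed.

Lemma arc_sidesP (a : Arc S) : exists c1 c2 : corner, [/\ c1 != c2,
  dside c1 = inl a, dside c2 = inl a & forall c, dside c = inl a -> c = c1 \/ c = c2].
Proof.
have /cards2P [c1 [c2 [c12 def2]]] : #|[set c : corner | dside c == inl a]| == 2.
  by rewrite card_arc_sides.
have mem c : (dside c == inl a) = (c == c1) || (c == c2).
  by rewrite -[in RHS]in_set2 -def2 inE.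
exists c1, c2; split => //; first by apply/eqP; rewrite mem eqxx.
  by apply/eqP; rewrite mem eqxx orbT.
by move=> c /eqP; rewrite mem => /orP [] /eqP; [left|right].
Qed.

Lemma arc_glued (c : corner) : is_arc (dside c) -> exists c', glued c c'.
Proof.
case ec: (dside c) => [a|//] _.
have [c1 [c2 [c12 e1 e2 /(_ c ec) [] ->]]] := arc_sidesP a.
  by exists c2; rewrite /glued c12 e1 e2 eqxx.
by exists c1; rewrite /glued eq_sym c12 e1 e2 eqxx.
Qed.

Lemma glued_uniq (c c1 c2 : corner) : glued c c1 -> glued c c2 -> c1 = c2.
Proof.
move=> /and3P [n1 /eqP s1 a1] /and3P [n2 /eqP s2 _].
case ec: (dside c) a1 s1 s2 => [a|//] _ s1 s2.
have [x [y [_ _ _ mem]]] := arc_sidesP a.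
by case: (mem c ec) => ?; case: (mem c1 (esym s1)) => ?;
  case: (mem c2 (esym s2)) => ?; subst; rewrite ?eqxx in n1 n2 *.
Qed.

Definition partner (c : corner) : corner :=
  if [pick c' | glued c c'] is Some c' then c' else c.

Lemma partner_glued (c : corner) : is_arc (dside c) -> glued c (partner c).
Proof.
move=> /arc_glued [c' g]; rewrite /partner; case: pickP => [//|].
by move=> /(_ c'); rewrite g.
Qed.

Lemma partner_seg (c : corner) : is_seg (dside c) -> partner c = c.
Proof.
move=> sc; rewrite /partner; case: pickP => [c' g|//].
by rewrite /is_seg (glued_arc g) in sc.
Qed.

Lemma dside_partner (c : corner) : dside (partner c) = dside c.
Proof.
case: (boolP (is_arc (dside c))) => [a|s]; last by rewrite partner_seg.
by rewrite -(glued_side (partner_glued a)).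
Qed.

Lemma partnerK : involutive partner.
Proof.
move=> c; case: (boolP (is_arc (dside c))) => [a|s]; last by rewrite !partner_seg.
have g := partner_glued a; rewrite glued_sym in g.
by apply: glued_uniq (partner_glued _) g; rewrite dside_partner.
Qed.

Lemma partner_inj : injective partner.
Proof. exact: inv_inj partnerK. Qed.

Lemma dend_partner (c : corner) : is_arc (dside c) -> dend (partner c) = dvtx c.
Proof. by move=> a; rewrite (glued_dvtx (partner_glued a)). Qed.

Lemma bsym_seg (c : corner) : is_seg (dside c) -> bsym (dvtx c) (dend c).
Proof. by move=> sc; apply/orP; left; apply/existsP; exists c; rewrite sc !eqxx. Qed.

Lemma bsym_sym : symmetric (@bsym S).
Proof. by move=> p q; rewrite /bsym /= orbC. Qed.

Lemma same_bdry_sym : connect_sym (@bsym S).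
Proof. exact: sym_connect_sym bsym_sym. Qed.

Lemma seg_side_inj (c c' : corner) : is_seg (dside c) -> dside c = dside c' -> c = c'.
Proof.
case ec: (dside c) => [//|s] _ ec'.
have /cards1P [c0 def1] : #|[set d : corner | dside d == inr s]| == 1.
  by rewrite card_seg_sides.
have mem d : dside d = inr s -> d = c0.
  by move=> ed; apply/set1P; rewrite -def1 inE ed.
by rewrite (mem c ec) (mem c' (esym ec')).
Qed.

Lemma edge_surj (e : edge) : exists c : corner, dside c = e.
Proof.
case: e => [a|s].
  by have [c1 [_ [_ e1 _ _]]] := arc_sidesP a; exists c1.
have /card_gt0P [c] : (0 < #|[set c : corner | dside c == inr s]|)%N by rewrite card_seg_sides.
by rewrite inE => /eqP; exists c.
Qed.

Lemma tri_connect_ind (Q : Tri S -> Prop) (t0 : Tri S) :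
  Q t0 -> (forall t t', trel t t' -> Q t -> Q t') -> forall t, Q t.
Proof.
move=> Qt0 Qstep t; have /connectP [q tq ->] := trel_connected t0 t.
by elim: q t0 Qt0 tq => //= t1 q IHq t0 Qt0 /andP [t01 tq]; apply: IHq (Qstep _ _ t01 Qt0) tq.
Qed.

Lemma I3_cases (i j : 'I_3) : [\/ i = j, i = ordS j | j = ordS i].
Proof.
case: i j => [[|[|[|i]]] Hi] [[|[|[|j]]] Hj] //;
  first [by constructor 1; apply: val_inj | by constructor 2; apply: val_inj
        | by constructor 3; apply: val_inj].
Qed.

Definition shift_corner (c : corner) : corner := (c.1, ordS c.2).

Lemma shift_corner_inj : injective shift_corner.
Proof.
move=> [t k] [t' k'] e; congr (_, _); first exact: (congr1 fst e).
by apply: ordS_inj; exact: (congr1 snd e).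
Qed.

Lemma dside_in_shift (c : corner) : dside_in (shift_corner c) = dside c.
Proof. by rewrite /dside_in /= ordSK. Qed.

(** * Coboundaries *)

Definition delta (R : zmodType) (r : edge -> R) (c : corner) : R :=
  r (dside_in c) - r (dside c).

Definition balanced (R : zmodType) (x : corner -> R) : Prop :=
  (forall t : Tri S, \sum_(k < 3) x (t, k) = 0) /\
  (forall p : Pt S, \sum_(c | same_bdry (dvtx c) p) x c = 0).

Lemma sum_delta_tri (R : zmodType) (r : edge -> R) (t : Tri S) :
  \sum_(k < 3) delta r (t, k) = 0.
Proof.
rewrite sumrB (reindex_inj (@ordS_inj 3)) /=.
by rewrite (eq_bigr (fun k => r (side t k))) ?subrr // => k _; rewrite /dside_in /= ordSK.
Qed.

(* Reindexing by [shift_corner] and then by [partner] matches every side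
   ending at a corner of the component with a side starting at one. *)
Lemma sum_delta_bdry (R : zmodType) (r : edge -> R) (p : Pt S) :
  \sum_(c | same_bdry (dvtx c) p) delta r c = 0.
Proof.
rewrite sumrB (reindex_inj shift_corner_inj) /=.
rewrite (eq_bigr (fun c => r (dside c))) => [|c _]; last exact/congr1/dside_in_shift.
rewrite (reindex_inj partner_inj) /= (eq_bigr (fun c => r (dside c))) => [|c _]; last first.
  by rewrite dside_partner.
rewrite (eq_bigl (fun c => same_bdry (dvtx c) p)) ?subrr // => c.
case: (boolP (is_arc (dside c))) => [a|s].
  by rewrite -[dvtx (shift_corner _)]/(dend (partner c)) dend_partner.
rewrite partner_seg // -[dvtx (shift_corner _)]/(dend c) /same_bdry.
by rewrite (same_connect1 same_bdry_sym (bsym_seg s)).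
Qed.

Lemma coboundary_balanced (R : zmodType) (x : corner -> R) (r : edge -> R) :
  x =1 delta r -> balanced x.
Proof.
move=> xr; split=> [t|p]; under eq_bigr do rewrite xr.
  exact: sum_delta_tri.
exact: sum_delta_bdry.
Qed.

Definition next_corner (c : corner) : corner := shift_corner (partner c).

(* Turning around a marked point [p] from corner to corner never reaches a
   corner whose incoming side is a boundary segment, so such a corner would
   be missing from the image of an injection of the corners at [p] into
   themselves. *)
Lemma exists_seg_corner (p : Pt S) : exists c : corner, (dvtx c == p) && is_seg (dside c).
Proof.
apply/existsP; apply: contraT; rewrite negb_exists => /forallP noseg.
have arc_at c : dvtx c == p -> is_arc (dside c).
  by move=> cp; move: (noseg c); rewrite cp /is_seg negbK.
pose A := [set c : corner | dvtx c == p].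
have next_inj : injective next_corner.
  by move=> c c' /shift_corner_inj /partner_inj.
have nextA : [set next_corner c | c in A] \subset A.
  apply/subsetP => _ /imsetP [c cA ->]; rewrite !inE in cA *.
  by rewrite -[dvtx _]/(dend (partner c)) dend_partner ?arc_at.
have [c0 [c0p [sc0|sc0]]] := boundary_corner p.
  by move: (noseg c0); rewrite c0p eqxx sc0.
have c0_next : c0 \notin [set next_corner c | c in A].
  apply/imsetP => -[c cA ec0]; rewrite inE in cA.
  move: sc0; rewrite ec0 /next_corner dside_in_shift dside_partner.
  by rewrite /is_seg arc_at.
have : (#|A| <= #|A :\ c0|)%N.
  rewrite -(card_imset A next_inj); apply: subset_leq_card; apply/subsetP => c cim.
  by rewrite in_setD1 (subsetP nextA c cim) andbT; apply: contraNneq c0_next => <-.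
by rewrite (cardsD1 c0 A) inE c0p eqxx ltnn.
Qed.

Lemma card_Pt_le_Seg : (#|Pt S| <= #|Seg S|)%N.
Proof.
pose c_at p := xchoose (exists_seg_corner p).
pose f p := dside (c_at p).
have fP p : dvtx (c_at p) = p /\ is_seg (f p).
  by have /andP [/eqP ? ?] := xchooseP (exists_seg_corner p).
have f_inj : injective f.
  move=> p q fpq; have [ep sp] := fP p; have [eq_q _] := fP q.
  by rewrite -ep -eq_q (seg_side_inj sp fpq).
rewrite -(card_imset predT f_inj) -(card_imset predT (@inr_inj (Arc S) (Seg S))).
apply: subset_leq_card; apply/subsetP => _ /imsetP [p _ ->].
by have [_] := fP p; case: (f p) => // s _; apply: imset_f.
Qed.

Lemma card_corner : #|{: corner}| = (2 * #|Arc S| + #|Seg S|)%N.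
Proof.
rewrite -sum1_card (partition_big (@dside S) xpredT) //= big_sumType /=.
have fiber e : (\sum_(c | dside c == e) 1 = #|[set c : corner | dside c == e]|)%N.
  by rewrite -sum1_card; apply: eq_bigl => c; rewrite inE.
rewrite (eq_bigr (fun _ => 2%N)) => [|a _]; last by rewrite fiber card_arc_sides.
rewrite [X in (_ + X)%N](eq_bigr (fun _ => 1%N)) => [|s _]; last first.
  by rewrite fiber card_seg_sides.
by rewrite !sum_nat_const muln1 mulnC; congr (_ * _ + _)%N; apply: eq_card.
Qed.

Definition bdry := {p : Pt S | roots (@bsym S) p}.

Definition bdry_of (p : Pt S) : bdry :=
  exist _ (fingraph.root (@bsym S) p) (roots_root same_bdry_sym p).

Lemma bdry_ofK (b : bdry) : bdry_of (val b) = b.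
Proof. by apply: val_inj; rewrite /= (eqP (valP b)). Qed.

Lemma same_bdryE (p : Pt S) (b : bdry) : same_bdry p (val b) = (bdry_of p == b).
Proof.
by rewrite /same_bdry -(root_connect same_bdry_sym) (eqP (valP b)) -val_eqE.
Qed.

Lemma card_bdry : #|{: bdry}| = nbdry S.
Proof. by rewrite card_sig /nbdry /n_comp_mem; apply: eq_card => p; rewrite !inE andbT. Qed.

Lemma corner_dim_count :
  (#|{: corner}| + 2 <= #|{: edge}| + #|{: Tri S + bdry}|)%N.
Proof.
have := euler_genus0; have := card_Pt_le_Seg; have := card_corner.
rewrite !card_sum card_prod card_ord card_bdry; lia.
Qed.

Section DifferencePropagation.
Variables (R : zmodType) (G : pred R) (r : edge -> R).
Hypotheses (G0 : G 0) (GB : forall x y, G x -> G y -> G (x - y)).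
Hypothesis G_delta : forall c, G (delta r c).

Let GN x : G x -> G (- x).
Proof. by move=> Gx; rewrite -sub0r; apply: GB. Qed.

Let G_trans x y z : G (x - y) -> G (y - z) -> G (x - z).
Proof. by move=> Gxy Gyz; rewrite -(subrKA y) -[_ - z]opprK; apply: GB => //; apply: GN. Qed.

Lemma sides_diff_closed (t : Tri S) (i j : 'I_3) : G (r (side t i) - r (side t j)).
Proof.
have deltaS k : delta r (t, ordS k) = r (side t k) - r (side t (ordS k)).
  by rewrite /delta /dside_in /= ordSK.
case: (I3_cases i j) => [->|->|->]; first by rewrite subrr.
  by rewrite -opprB -deltaS; apply: GN.
by rewrite -deltaS.
Qed.

Lemma edges_diff_closed (e e' : edge) : G (r e - r e').
Proof.
have [t0 _] := card_gt0P card_Tri_gt0.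
suff G_e e0 : G (r e0 - r (side t0 0)).
  by apply: G_trans (G_e e) _; rewrite -opprB; apply/GN/G_e.
have G_tri : forall t, G (r (side t 0) - r (side t0 0)).
  apply: (tri_connect_ind (t0 := t0)) => [|t t' /existsP [i /existsP [j g]] Gt].
    by rewrite subrr.
  apply: G_trans (sides_diff_closed t' 0 j) _.
  have side_ij : side t i = side t' j := glued_side g.
  by rewrite -side_ij; apply: G_trans (sides_diff_closed t i 0) Gt.
have [[t i] <-] := edge_surj e0.
exact: G_trans (sides_diff_closed t i 0) (G_tri t).
Qed.

End DifferencePropagation.

(** * Linear algebra over the rationals *)

Definition cobound_mx : 'M[rat]_(#|{: edge}|, #|{: corner}|) :=
  mxf (fun (e : edge) (c : corner) => (e == dside_in c)%:R - (e == dside c)%:R).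

Definition incid (c : corner) (j : Tri S + bdry) : rat :=
  match j with inl t => (c.1 == t)%:R | inr b => (bdry_of (dvtx c) == b)%:R end.

Definition incid_mx : 'M[rat]_(#|{: corner}|, #|{: Tri S + bdry}|) := mxf incid.

Lemma mul_vecf_cobound (r : edge -> rat) : vecf r *m cobound_mx = vecf (delta r).
Proof.
rewrite mul_vecf_mxf; apply: eq_vecf => c.
by under eq_bigr do rewrite mulrBr; rewrite sumrB !sum_mul_eqb.
Qed.

Lemma balanced_mul_incid (x : corner -> rat) : balanced x -> vecf x *m incid_mx = 0.
Proof.
move=> [x_tri x_bdry]; rewrite mul_vecf_mxf -(vecf0 (Tri S + bdry)%type).
apply: eq_vecf => -[t|b]; rewrite sum_mul_natb.
  rewrite -[RHS](x_tri t) -(big_pred1_eq +%R t (fun t' => \sum_(k < 3) x (t', k))).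
  by rewrite pair_big_dep; apply: eq_big => [[t' k]|[t' k] _] //=; rewrite andbT.
by rewrite -[RHS](x_bdry (val b)); apply: eq_bigl => c; rewrite same_bdryE.
Qed.

Lemma cobound_incid : cobound_mx *m incid_mx = 0.
Proof.
apply/row_matrixP => i; rewrite row_mul row0.
have -> : row i cobound_mx = vecf (delta (fun e => (e == enum_val i)%:R)).
  by apply/rowP => c; rewrite !mxE /delta ![_ == enum_val i]eq_sym.
by apply/balanced_mul_incid/coboundary_balanced.
Qed.

Lemma cobound_left_ker (u : 'rV[rat]_#|{: edge}|) :
  u *m cobound_mx = 0 -> (u <= (const_mx 1 : 'rV_#|{: edge}|))%MS.
Proof.
rewrite [u]vecf_eta; set r := fun e => u 0 (enum_rank e).
rewrite mul_vecf_cobound -(vecf0 corner) => /vecf_inj delta0.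
have [t0 _] := card_gt0P card_Tri_gt0.
have r_const e : r e = r (side t0 0).
  apply/eqP; rewrite -subr_eq0.
  apply: (@edges_diff_closed _ (fun y => y == 0)) => [//|x y /eqP -> /eqP ->|c].
    by rewrite subrr.
  by rewrite /= delta0.
suff -> : vecf r = r (side t0 0) *: const_mx 1 by rewrite scalemx_sub.
by apply/rowP => i; rewrite !mxE mulr1 r_const.
Qed.

Lemma sum_incid (w : Tri S + bdry -> rat) (c : corner) :
  \sum_j w j * incid c j = w (inl c.1) + w (inr (bdry_of (dvtx c))).
Proof.
rewrite big_sumType /=; congr (_ + _).
  by rewrite (eq_bigr (fun t => w (inl t) * (t == c.1)%:R)) ?sum_mul_eqb // => t _; rewrite eq_sym.
by rewrite (eq_bigr (fun b => w (inr b) * (b == bdry_of (dvtx c))%:R)) ?sum_mul_eqb // => b _;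
  rewrite eq_sym.
Qed.

Definition tri_bdry_sign (j : Tri S + bdry) : rat := if j is inl _ then 1 else -1.

Lemma incid_left_ker (u : 'rV[rat]_#|{: Tri S + bdry}|) :
  u *m incid_mx^T = 0 -> (u <= vecf tri_bdry_sign)%MS.
Proof.
rewrite [u]vecf_eta; set w := fun j => u 0 (enum_rank j).
rewrite /incid_mx trmx_mxf mul_vecf_mxf -(vecf0 corner) => /vecf_inj wc0.
have w_corner c : w (inl c.1) = - w (inr (bdry_of (dvtx c))).
  by apply/eqP; rewrite -addr_eq0 -sum_incid; apply/eqP/wc0.
have [t0 _] := card_gt0P card_Tri_gt0.
have w_tri : forall t, w (inl t) = w (inl t0).
  apply: (tri_connect_ind (t0 := t0)) => // t t' /existsP [i /existsP [j g]] wt.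
  by rewrite -wt (w_corner (t', ordS j)) (w_corner (t, i)) (glued_dvtx g).
suff -> : vecf w = w (inl t0) *: vecf tri_bdry_sign by rewrite scalemx_sub.
apply/rowP => k; rewrite !mxE; case: (enum_val k) => [t|b] /=.
  by rewrite mulr1 w_tri.
have [c cb] := dvtx_surj (val b).
by rewrite -(bdry_ofK b) -cb -[LHS]opprK -w_corner w_tri mulrN1.
Qed.

Lemma balanced_coboundary_rat (x : corner -> rat) :
  balanced x -> exists r : edge -> rat, x =1 delta r.
Proof.
move=> /balanced_mul_incid x_incid.
have : (vecf x <= cobound_mx)%MS.
  apply: submx_trans (kermx_sub_of_rank cobound_incid _); first by rewrite sub_kermx x_incid.
  rewrite -addnA; apply: leq_trans corner_dim_count; rewrite leq_add2l.
  exact: leq_add (rank_kermx_le1 cobound_left_ker) (rank_kermx_le1 incid_left_ker).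
case/submxP => r0 x_r0; exists (fun e => r0 0 (enum_rank e)); apply: vecf_inj.
by rewrite -mul_vecf_cobound -vecf_eta.
Qed.

(* A rational [r] with integral coboundary differs from an integral one by a
   constant, since the differences [r e - r e'] propagate through the
   connected surface. *)
Lemma balanced_coboundary (x : corner -> int) :
  balanced x -> exists r : edge -> int, x =1 delta r.
Proof.
move=> [x_tri x_bdry].
have [rq x_rq] : exists rq : edge -> rat, (fun c => (x c)%:~R) =1 delta rq.
  apply: balanced_coboundary_rat; split=> [t|p].
    by rewrite -rmorph_sum /= x_tri.
  by rewrite -rmorph_sum /= x_bdry.
have [t0 _] := card_gt0P card_Tri_gt0.
have rq_int e : rq e - rq (side t0 0) \is a Num.int.
  apply: (@edges_diff_closed _ (fun y => y \is a Num.int)) => [|a b|c].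
  - exact: rpred0.
  - exact: rpredB.
  - by rewrite -x_rq intr_int.
exists (fun e => Num.floor (rq e - rq (side t0 0))) => c.
apply: (@intr_inj rat); rewrite intrB !floorK ?rq_int // x_rq.
by rewrite /delta opprB addrA subrK.
Qed.

(** * Gradings by admissible cuts *)

Definition wdiff (chi1 chi2 : cut S) (c : corner) : int :=
  weight chi2 c.1 c.2 - weight chi1 c.1 c.2.

Lemma sum_weight_tri (chi : cut S) (t : Tri S) :
  \sum_(k < 3) weight chi t k = (internal t : nat)%:Z.
Proof.
rewrite (bigD1 (chi t)) //= big1 ?addr0 => [|k /negbTE kt]; last by rewrite /weight kt andbF.
by rewrite /weight eqxx andbT.
Qed.

Lemma sum_weight_bdry (chi : cut S) (p : Pt S) :
  \sum_(c | same_bdry (dvtx c) p) weight chi c.1 c.2 = (ncuts_on chi p)%:Z.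
Proof.
rewrite /ncuts_on -sum1_card -natz natr_sum [RHS]big_mkcond [LHS]big_mkcond /=.
rewrite [LHS](_ : _ = \sum_t \sum_(k < 3) if same_bdry (vtx t k) p then weight chi t k else 0);
  last by rewrite pair_bigA.
apply: eq_bigr => t _; rewrite (bigD1 (chi t)) //= big1 ?addr0 => [|k /negbTE kt]; last first.
  by rewrite /weight kt andbF if_same.
by rewrite inE /weight eqxx andbT; case: (internal t); case: ifP.
Qed.

Lemma equidistributed_balanced (chi1 chi2 : cut S) :
  equidistributed chi1 chi2 <-> balanced (wdiff chi1 chi2).
Proof.
split=> [eq_cuts|[_ wdiff_bdry] p].
  by split=> [t|p]; rewrite sumrB ?sum_weight_tri ?sum_weight_bdry ?eq_cuts subrr.
move/eqP: (wdiff_bdry p); rewrite sumrB !sum_weight_bdry subr_eq0.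
by move=> /eqP [->].
Qed.

Definition arc_val (R : Arc S -> int) (e : edge) : int := if e is inl a then R a else 0.

Definition tri_val (R : Arc S -> int) (t : Tri S) : int :=
  if [pick i | is_arc (side t i)] is Some i then arc_val R (side t i) else 0.

Definition extend_arcs (R : Arc S -> int) (e : edge) : int :=
  if e is inl a then R a
  else if [pick c : corner | dside c == e] is Some c then tri_val R c.1 else 0.

Lemma extend_arcs_flat (R : Arc S -> int) (t : Tri S) :
  (forall k a b, side t (ord_pred k) = inl a -> side t k = inl b -> R a = R b) ->
  forall i, extend_arcs R (side t i) = tri_val R t.
Proof.
move=> flat i; case ei: (side t i) => [a|s] /=.
  rewrite /tri_val; case: pickP => [j|/(_ i)]; last by rewrite ei.
  case ej: (side t j) => [a'|//] _ /=.
  case: (I3_cases i j) => eij; subst.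
  - by move: ej; rewrite ei => -[->].
  - by apply/esym/(flat (ordS j)); rewrite ?ordSK.
  - by apply: (flat (ordS i)); rewrite ?ordSK.
case: pickP => [c /eqP ec|/(_ (t, i))]; last by rewrite /dside ei eqxx.
have sc : is_seg (dside c) by rewrite ec.
by rewrite (seg_side_inj sc (_ : dside c = dside (t, i))) // ec /dside ei.
Qed.

Lemma graded_equiv_idP (chi1 chi2 : cut S) :
  graded_equiv_id chi1 chi2 <-> exists r : edge -> int, wdiff chi1 chi2 =1 delta r.
Proof.
split=> [[R HR]|[r wr]]; last first.
  exists (fun a => r (inl a)) => t k a b ea eb; have := wr (t, k).
  rewrite /wdiff /delta /dside_in /dside /= ea eb; lia.
exists (extend_arcs R) => -[t k]; rewrite /wdiff /delta /dside_in /dside /=.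
case: (boolP (internal t)) => [/forallP all_arc|not_int].
  have := HR t k; case ea: (side t (ord_pred k)) (all_arc (ord_pred k)) => [a|//] _.
  case eb: (side t k) (all_arc k) => [b|//] _ /(_ a b erefl erefl) ->.
  rewrite /=; lia.
have flat k' a b : side t (ord_pred k') = inl a -> side t k' = inl b -> R a = R b.
  by move=> ea eb; move: (HR t k' a b ea eb); rewrite /weight (negbTE not_int) /=; lia.
by rewrite !(extend_arcs_flat flat) /weight (negbTE not_int) !subrr.
Qed.

End TriangulatedSurface.

Theorem theorem3p12 (S : tsurf) (HS : genus0_triangulated S)
  (chi1 chi2 : cut S) :
  graded_equiv_id chi1 chi2 <-> equidistributed chi1 chi2.
Proof.
split=> [/(graded_equiv_idP HS) [r wr] | /equidistributed_balanced wbal].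
  by apply/equidistributed_balanced; exact: coboundary_balanced wr.
by apply/(graded_equiv_idP HS); exact: balanced_coboundary HS _ wbal.
Qed.
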